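(* Let $G$ be a finitely generated group, $p$ a prime, and $x\in G$. Then $RG_p\big(G/\langle\langle x\rangle\rangle\big)\ge RG_p(G)-1$.
   Context: $\langle\langle x\rangle\rangle$ denotes the normal closure of $x$ in $G$. For a group $A$, $d(A)$ is the minimal number of generators and $d_p(A)=d\big(A/[A,A]A^p\big)$. For a finitely generated group $G$, $RG_p(G)=\inf_H\frac{d_p(H)-1}{[G:H]}$, the infimum over normal subgroups $H\trianglelefteq G$ of $p$-power index. *)

From HB Require Import structures.
From mathcomp Require Import all_boot all_order all_algebra.
From mathcomp Require Import boolp classical_sets reals.

Set Implicit Arguments.
Unset Strict Implicit.
Unset Printing Implicit Defensive.

(* Possibly infinite groups: MathComp's [groupType] (boot/monoid.v). *)

Section GroupNotions.
Variable G : groupType.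
Local Open Scope group_scope.

Definition subgrp (H : G -> Prop) : Prop :=
  H 1 /\ (forall a b, H a -> H b -> H (a * b)) /\ (forall a, H a -> H a^-1).

Definition normal_subgrp (H : G -> Prop) : Prop :=
  subgrp H /\ (forall h g, H h -> H (h ^ g)).

Definition gen (A : G -> Prop) : G -> Prop :=
  fun g => forall K : G -> Prop, subgrp K -> (forall a, A a -> K a) -> K g.

Definition normal_closure (x : G) : G -> Prop :=
  fun g => forall K : G -> Prop, normal_subgrp K -> K x -> K g.

Definition fin_gen : Prop :=
  exists s : seq G, forall g, gen (fun a => a \in s) g.

(* [G : H] = n : the left cosets of H in G are exactly s_0 H, ..., s_(n-1) H,
   pairwise distinct *)
Definition has_index (H : G -> Prop) (n : nat) : Prop :=
  exists s : seq G, size s = n /\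
    (forall g, exists i, (i < n)%N /\ H ((nth 1 s i)^-1 * g)) /\
    (forall i j, (i < n)%N -> (j < n)%N ->
       H ((nth 1 s i)^-1 * nth 1 s j) -> i = j).

Definition commp (p : nat) (H : G -> Prop) : G -> Prop :=
  gen (fun c => (exists a b, H a /\ H b /\ c = [~ a, b]) \/
                (exists a, H a /\ c = a ^+ p)).

(* H is generated by k elements modulo [H,H]H^p, i.e. H/[H,H]H^p is
   generated by the images of k elements of H *)
Definition gen_mod_commp (p : nat) (H : G -> Prop) (k : nat) : Prop :=
  exists s : seq G, size s = k /\ (forall a, a \in s -> H a) /\
    (forall h, H h <-> gen (fun a => a \in s \/ commp p H a) h).

Definition is_dp (p : nat) (H : G -> Prop) (k : nat) : Prop :=
  gen_mod_commp p H k /\ (forall j, gen_mod_commp p H j -> (k <= j)%N).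

End GroupNotions.

Definition RG (R : realType) (G : groupType) (p : nat) : R :=
  inf [set r : R | exists (H : G -> Prop) (e k : nat),
         normal_subgrp H /\ has_index H (p ^ e) /\ is_dp p H k /\
         r = ((k%:R - 1) / (p ^ e)%:R)%R].

From HB Require Import structures.
From mathcomp Require Import all_boot all_order all_algebra.
From mathcomp Require Import boolp classical_sets reals.
From mathcomp Require Import ring lra.

(* Let H be normal of index n = p^e in Q = G/<<x>> and H' its preimage in G,
   again normal of index n.  Modulo [H',H']H'^p, the group H' is generated by
   lifts of d_p(H) generators of H together with the n conjugates x^(r_i),
   r_i running over coset representatives of H' in G: conjugating by an
   element of H' changes an element of H' only by a commutator, so the
   subgroup K generated by these and [H',H']H'^p contains every x^(r_i h),
   hence <<x>> = ker f, hence H'.  Thus d_p(H') <= d_p(H) + n, i.e.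
   (d_p(H') - 1)/n <= (d_p(H) - 1)/n + 1, and one takes infima. *)

Set Implicit Arguments.
Unset Strict Implicit.
Unset Printing Implicit Defensive.

Section Subgroups.
Variable G : groupType.
Local Open Scope group_scope.
Implicit Types (A K : G -> Prop) (a b g : G).

Lemma gen_subgrp A : subgrp (gen A).
Proof.
split; first by move=> K [].
split.
- by move=> a b Ha Hb K sK AK; case: (sK) => _ [KM _]; apply: KM; [apply: Ha|apply: Hb].
- by move=> a Ha K sK AK; case: (sK) => _ [_ KV]; apply: KV; apply: Ha.
Qed.

Lemma gen_incl A a : A a -> gen A a.
Proof. by move=> Aa K _ AK; apply: AK. Qed.

Lemma gen_min A K : subgrp K -> (forall a, A a -> K a) -> forall g, gen A g -> K g.
Proof. by move=> sK AK g Hg; apply: Hg. Qed.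

Lemma subgrpX K a n : subgrp K -> K a -> K (a ^+ n).
Proof.
move=> [K1 [KM _]] Ka; elim: n => [|n IH]; first by rewrite expg0.
by rewrite expgS; apply: KM.
Qed.

Lemma subgrpR K a b : subgrp K -> K a -> K b -> K [~ a, b].
Proof.
move=> [K1 [KM KV]] Ka Kb; rewrite commgEl conjgE.
by apply KM; [apply KV|apply KM; [apply KV|apply KM]].
Qed.

Lemma commp_sub p K : subgrp K -> forall g, commp p K g -> K g.
Proof.
move=> sK; apply: gen_min => // c [[a [b [Ka [Kb ->]]]]|[a [Ka ->]]].
  exact: subgrpR.
exact: subgrpX.
Qed.

Lemma commp_R p K a b : K a -> K b -> commp p K [~ a, b].
Proof. by move=> Ka Kb; apply: gen_incl; left; exists a, b. Qed.

Lemma commp_X p K a : K a -> commp p K (a ^+ p).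
Proof. by move=> Ka; apply: gen_incl; right; exists a. Qed.

Lemma subgrp_conj_commp p (H K : G -> Prop) a h :
  subgrp K -> (forall g, commp p H g -> K g) -> K a -> H a -> H h -> K (a ^ h).
Proof.
move=> [_ [KM _]] cK Ka Ha Hh.
have -> : a ^ h = a * [~ a, h] by rewrite commgEl mulVKg.
by apply: KM => //; apply: cK; apply: commp_R.
Qed.

Lemma normal_closure_min K x :
  subgrp K -> (forall t, K (x ^ t)) -> forall g, normal_closure x g -> K g.
Proof.
move=> [K1 [KM KV]] Kx g ng.
have nK : normal_subgrp (fun g => forall t, K (g ^ t)).
  split; last by move=> h u Hh t; rewrite -conjgM.
  split; first by move=> t; rewrite conj1g.
  split; first by move=> a b Ha Hb t; rewrite conjMg; apply: KM.
  by move=> a Ha t; rewrite conjVg; apply: KV.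
by have := ng _ nK Kx 1; rewrite conjg1.
Qed.

Lemma dp_exists p (H : G -> Prop) j :
  gen_mod_commp p H j -> exists k, is_dp p H k /\ (k <= j)%N.
Proof.
move=> gj; have ex : exists j, `[< gen_mod_commp p H j >] by exists j; apply/asboolP.
case: (ex_minnP ex) => k /asboolP gk mk.
exists k; split; last by apply: mk; apply/asboolP.
by split=> // i gi; apply: mk; apply/asboolP.
Qed.

Lemma fin_gen_gmc p : fin_gen G -> exists j, gen_mod_commp p (fun _ : G => True) j.
Proof.
move=> [s gs]; exists (size s), s; split=> //; split=> // h; split=> // _.
by apply: gen_min (gs h) => [|a sa]; [exact: gen_subgrp|apply: gen_incl; left].
Qed.

Lemma index_setT : has_index (fun _ : G => True) 1.
Proof.
exists [:: 1]; split=> //; split; first by move=> g; exists 0%N.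
by move=> [|i] [|j].
Qed.

End Subgroups.

Section Morphism.
Variables (G Q : groupType) (f : G -> Q).
Hypothesis fM : forall a b : G, f (a * b)%g = (f a * f b)%g.
Local Open Scope group_scope.

Lemma morph1 : f 1 = 1.
Proof. by apply: (@mulgI _ (f 1)); rewrite -fM !mulg1. Qed.

Lemma morphV a : f a^-1 = (f a)^-1.
Proof. by apply: (@mulgI _ (f a)); rewrite -fM !mulgV morph1. Qed.

Lemma morphJ a b : f (a ^ b) = f a ^ f b.
Proof. by rewrite !conjgE !fM morphV. Qed.

Lemma morphR a b : f [~ a, b] = [~ f a, f b].
Proof. by rewrite !commgEl fM morphV morphJ. Qed.

Lemma morphX a n : f (a ^+ n) = f a ^+ n.
Proof. by elim: n => [|n IH]; rewrite ?expg0 ?morph1 // !expgS fM IH. Qed.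

Lemma preim_subgrp (K : Q -> Prop) : subgrp K -> subgrp (fun g => K (f g)).
Proof.
move=> [K1 [KM KV]]; split; first by rewrite morph1.
split; first by move=> a b Ha Hb; rewrite fM; apply: KM.
by move=> a Ha; rewrite morphV; apply: KV.
Qed.

Lemma preim_normal (K : Q -> Prop) :
  normal_subgrp K -> normal_subgrp (fun g => K (f g)).
Proof.
move=> [sK nK]; split; first exact: preim_subgrp.
by move=> h g Hh; rewrite morphJ; apply: nK.
Qed.

Lemma image_subgrp (K : G -> Prop) : subgrp K -> subgrp (fun q => exists2 g, K g & f g = q).
Proof.
move=> [K1 [KM KV]]; split; first by exists 1; rewrite ?morph1.
split; first by move=> _ _ [u Ku <-] [v Kv <-]; exists (u * v); [apply: KM|rewrite fM].
by move=> _ [u Ku <-]; exists u^-1; [apply: KV|rewrite morphV].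
Qed.

Hypothesis f_surj : forall q : Q, exists g : G, f g = q.

Lemma preim_seq (s : seq Q) : exists s' : seq G, map f s' = s.
Proof.
elim: s => [|q s [s' <-]]; first by exists [::].
by have [g <-] := f_surj q; exists (g :: s').
Qed.

Lemma preim_index (H : Q -> Prop) n : has_index H n -> has_index (fun g => H (f g)) n.
Proof.
move=> [s [<- [cov dis]]]; have [r def_s] := preim_seq s; subst s.
have nthr i : (i < size r)%N -> f (nth 1 r i) = nth 1 (map f r) i.
  by move=> ir; rewrite -morph1 (nth_map 1).
rewrite size_map in cov dis *; exists r; split=> //; split.
  by move=> g; have [i [ir Hi]] := cov (f g); exists i; rewrite fM morphV nthr.
by move=> i j ir jr; rewrite fM morphV !nthr //; apply: dis.
Qed.

Lemma commp_image p (H : Q -> Prop) q :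
  commp p H q -> exists2 g, commp p (fun g => H (f g)) g & f g = q.
Proof.
apply: (gen_min (K := fun q => exists2 g, commp p (fun g => H (f g)) g & f g = q)).
  exact/image_subgrp/gen_subgrp.
move=> c [[a [b [Ha [Hb ->]]]]|[a [Ha ->]]].
  have [[a' def_a] [b' def_b]] := (f_surj a, f_surj b); subst a b.
  by exists [~ a', b']; [exact: commp_R|rewrite morphR].
have [a' def_a] := f_surj a; subst a.
by exists (a' ^+ p); [exact: commp_X|rewrite morphX].
Qed.

Lemma fin_gen_image : fin_gen G -> fin_gen Q.
Proof.
move=> [s gs]; exists (map f s) => q; have [g <-] := f_surj q.
apply: (gen_min (K := fun g => gen _ (f g))) (gs g) => [|a sa].
  exact/preim_subgrp/gen_subgrp.
by apply: gen_incl; apply: map_f.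
Qed.

End Morphism.

Section NormalClosureQuotient.
Variables (G Q : groupType) (f : G -> Q) (x : G).
Hypothesis fM : forall a b : G, f (a * b)%g = (f a * f b)%g.
Hypothesis f_surj : forall q : Q, exists g : G, f g = q.
Hypothesis f_ker : forall g : G, f g = 1%g <-> normal_closure x g.
Local Open Scope group_scope.

Lemma preim_gmc p (H : Q -> Prop) n k :
  normal_subgrp H -> has_index H n -> gen_mod_commp p H k ->
  gen_mod_commp p (fun g => H (f g)) (k + n).
Proof.
move=> [sH _] Hn [s [sz [s_H gen_H]]].
have [r [rz [r_cov _]]] := preim_index fM f_surj Hn.
have [s' def_s] := preim_seq f_surj s.
set H' := fun g => H (f g).
have sH' : subgrp H' := preim_subgrp fM sH.
set K := gen (fun a => a \in s' ++ map (conjg x) r \/ commp p H' a).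
have sK : subgrp K := gen_subgrp _.
have cK g : commp p H' g -> K g by move=> cg; apply: gen_incl; right.
have H'xt t : H' (x ^ t).
  have fx1 : f x = 1 by apply/f_ker.
  by rewrite /H' morphJ // fx1 conj1g; case: sH.
have KH' : forall g, K g -> H' g.
  apply: gen_min => // a [|]; last exact: commp_sub.
  rewrite mem_cat => /orP[s'a|/mapP[t _ ->]] //.
  by apply: s_H; rewrite -def_s map_f.
have Kxt t : K (x ^ t).
  have [i [ir Hi]] := r_cov t.
  rewrite -[t](mulVKg (nth 1 r i)) conjgM.
  apply: subgrp_conj_commp sK cK _ (H'xt _) Hi.
  by apply: gen_incl; left; rewrite mem_cat map_f ?orbT // mem_nth ?rz.
have f_K q : H q -> exists2 g, K g & f g = q.
  move=> /gen_H; apply: (gen_min (K := fun q => exists2 g, K g & f g = q)).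
    exact: image_subgrp.
  move=> a [|/(commp_image fM f_surj)[g cg <-]]; last by exists g; first apply: cK.
  rewrite -def_s => /mapP[g s'g ->]; exists g => //.
  by apply: gen_incl; left; rewrite mem_cat s'g.
exists (s' ++ map (conjg x) r); split.
  by rewrite size_cat size_map -sz -def_s size_map rz.
split; first by move=> a s'a; apply: KH'; apply: gen_incl; left.
move=> h; split=> [/f_K[g Kg fg]|]; last exact: KH'.
have [_ [KM _]] := sK.
rewrite -[h](mulVKg g); apply: KM => //.
by apply: (normal_closure_min sK Kxt); apply/f_ker; rewrite fM morphV // fg mulVg.
Qed.

End NormalClosureQuotient.

Import Order.TTheory GRing.Theory Num.Theory.

Section RankGradient.
Variables (R : realType) (p : nat).
Hypothesis p_gt0 : (0 < p)%N.

Lemma dp_ratio_ge_N1 k e : (- 1 <= (k%:R - 1) / (p ^ e)%:R :> R)%R.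
Proof.
have P1 : (1 <= (p ^ e)%:R :> R)%R by rewrite ler1n expn_gt0 p_gt0.
rewrite ler_pdivlMr ?(lt_le_trans ltr01) // mulN1r lerBrDl.
by have : (0 <= k%:R :> R)%R by []; lra.
Qed.

Lemma dp_ratio_le_add1 k k' e : (k' <= k + p ^ e)%N ->
  ((k'%:R - 1) / (p ^ e)%:R <= (k%:R - 1) / (p ^ e)%:R + 1 :> R)%R.
Proof.
move=> le_k'k; have P0 : (0 < (p ^ e)%:R :> R)%R by rewrite ltr0n expn_gt0 p_gt0.
have -> : ((k%:R - 1) / (p ^ e)%:R + 1 = (k%:R + (p ^ e)%:R - 1) / (p ^ e)%:R :> R)%R.
  by field; rewrite gt_eqF.
apply: ler_wpM2r; first by rewrite invr_ge0 ltW.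
by rewrite lerD2r -natrD ler_nat.
Qed.

Lemma RG_le_dp_ratio (G : groupType) (H : G -> Prop) e k :
  normal_subgrp H -> has_index H (p ^ e) -> is_dp p H k ->
  (RG R G p <= (k%:R - 1) / (p ^ e)%:R)%R.
Proof.
move=> nH Hn dk; apply: ge_inf; last by exists H, e, k.
by exists (-1)%R => _ [H0 [e0 [k0 [_ [_ [_ ->]]]]]]; apply: dp_ratio_ge_N1.
Qed.

Lemma RG_set_nonempty (G : groupType) : fin_gen G ->
  nonempty [set r : R | exists (H : G -> Prop) (e k : nat),
    normal_subgrp H /\ has_index H (p ^ e) /\ is_dp p H k /\
    r = ((k%:R - 1) / (p ^ e)%:R)%R].
Proof.
move=> fgG; have [j gj] := fin_gen_gmc p fgG; have [k [dk _]] := dp_exists gj.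
exists ((k%:R - 1) / (p ^ 0)%:R)%R, (fun _ => True), 0%N, k.
by split; [|split; [exact: index_setT|]].
Qed.

End RankGradient.

Theorem corollary3p3 (R : realType) (G Q : groupType) (p : nat) (x : G)
  (f : G -> Q) :
  fin_gen G -> prime p ->
  (forall a b : G, f (a * b)%g = (f a * f b)%g) ->
  (forall q : Q, exists g : G, f g = q) ->
  (forall g : G, f g = 1%g <-> normal_closure x g) ->
  (RG R G p - 1 <= RG R Q p)%R.
Proof.
move=> fgG /prime_gt0 p_gt0 fM f_surj f_ker.
apply: lb_le_inf; first exact/RG_set_nonempty/(fin_gen_image fM f_surj).
move=> _ [H [e [k [nH [Hn [dk ->]]]]]].
have [k' [dk' le_k'k]] := dp_exists (preim_gmc fM f_surj f_ker nH Hn dk.1).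
rewrite lerBlDr; apply: le_trans (dp_ratio_le_add1 R p_gt0 le_k'k).
exact: RG_le_dp_ratio (preim_normal fM nH) (preim_index fM f_surj Hn) dk'.
Qed.
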